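(* Let $L=\langle S,A,\to\rangle$ be a labelled transition system. For every eager strategy $\rho_{gb}$ of Duplicator in the $\emptyset$-generic bisimulation game on $L$, there is a strategy $\rho_{bb}$ of Duplicator in the branching bisimulation game on $L$ such that for every $\rho_{bb}$-consistent play $\pi$, $g(\pi)$ is a $\rho_{gb}$-consistent play in the $\emptyset$-generic bisimulation game.
   Context: An LTS is $\langle S,A,\to\rangle$ with states $S$, actions $A$ containing the internal action $\tau$, and $\to\subseteq S\times A\times S$; write $s\xrightarrow{a}t$. Branching bisimulation (bb) game: Spoiler-owned configurations $\langle (s,t),c,r\rangle_S$ and Duplicator-owned $\langle (s,t),c,r\rangle_D$ with $(s,t)\in S\times S$, $c\in (A\times S)\cup\{\dagger\}$, $r\in\{*,\checkmark\}$. From $\langle (s,t),c,r\rangle_S$ Spoiler may: (1) select $s\xrightarrow{a}s'$ and move to $\langle (s,t),(a,s'),*\rangle_D$ if $c=(a,s')$ or $c=\dagger$, and to $\langle (s,t),(a,s'),\checkmark\rangle_D$ otherwise; (2) select $t\xrightarrow{a}t'$ and move to $\langle (t,s),(a,t'),\checkmark\rangle_D$. From $\langle (u,v),(a,u'),r\rangle_D$ Duplicator may: (1) if $a=\tau$, move to $\langle (u',v),\dagger,\checkmark\rangle_S$; (2) for some $v\xrightarrow{a}v'$, move to $\langle (u',v'),\dagger,\checkmark\rangle_S$; (3) for some $v\xrightarrow{\tau}v'$, move to $\langle (u,v'),(a,u'),*\rangle_S$. $\emptyset$-generic bisimulation game: with formal tags $\frown,\smile$, Spoiler-owned configurations $\langle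 (s,t),c,m,r\rangle_S$ and Duplicator-owned $\langle (s,t),c,m,r\rangle_D$ with $(s,t)\in S\times S$, $c\in (A\times S)\cup\{\dagger\}$, $m\in (S\times\{\frown,\smile\})\cup\{\dagger\}$, $r\in\{*,\checkmark\}$. Spoiler from $\langle (s,t),c,m,r\rangle_S$ may: (S1) move to $\langle (s,t),c,m,*\rangle_D$ if $c\neq\dagger$; (S2a) for some $s\xrightarrow{a}s'$, move to $\langle (s,t),(a,s'),(t,\frown),*\rangle_D$ if $c=\dagger$; (S2b) for some $s\xrightarrow{a}s'$, move to $\langle (s,t),(a,s'),(t,\frown),\checkmark\rangle_D$ if $c\neq (a,s')$; (S3) for some $t\xrightarrow{a}t'$, move to $\langle (t,s),(a,t'),(s,\frown),\checkmark\rangle_D$. Duplicator from $\langle (u,v),(a,u'),(\bar v,f),r\rangle_D$ may: (D1) move to $\langle (u',\bar v),\dagger,\dagger,\checkmark\rangle_S$ if $a=\tau$; (D2) if $f=\frown$ and $\bar v\xrightarrow{a}v'$: (a) move to $\langle (u',v'),(a,u'),(v',\smile),*\rangle_S$ or (b) move to $\langle (u',v'),\dagger,\dagger,\checkmark\rangle_S$; (D3) for some $\bar v\xrightarrow{\tau}v'$: (a) move to $\langle (u,v'),(a,u'),(v',f),*\rangle_S$, or (b) only if $f=\smile$, move to $\langle (u',v'),\dagger,\dagger,\checkmark\rangle_S$. A strategy of Duplicator is a (possibly partial) function assigning to Duplicator-owned configurations a successor reachable by one of her legal moves; a play is consistent with it if every Duplicator-owned configuration on the play that has a successor is followed by the strategy's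 choice. A strategy in the $\emptyset$-generic game is eager if it never uses move (D2)(a). The augmentation $g$ maps $\langle (s,t),c,r\rangle$ to $\langle (s,t),c,(t,\frown),r\rangle$ if $c\neq\dagger$ and to $\langle (s,t),\dagger,\dagger,r\rangle$ if $c=\dagger$ (same owner), lifted pointwise to plays. *)

From Stdlib Require Import Arith.
Set Implicit Arguments.

Record LTS := MkLTS {
  lts_S : Type;
  lts_A : Type;
  lts_tau : lts_A;
  lts_trans : lts_S -> lts_A -> lts_S -> Prop
}.

Inductive owner := OSpoiler | ODuplicator.
Inductive rflag := RStar | RCheck.
Inductive ftag := Frown | Smile.

Section Games.
Variable L : LTS.
Let S := lts_S L.
Let A := lts_A L.
Let tau := lts_tau L.
Let trans := lts_trans L.

(* <(s,t), c, r>_owner ; c = None stands for dagger *)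
Record bbconf := BBConf {
  bb_pair : S * S;
  bb_c : option (A * S);
  bb_r : rflag;
  bb_own : owner }.

Inductive bb_move : bbconf -> bbconf -> Prop :=
| bbS1_star : forall s t c r a s',
    trans s a s' -> (c = None \/ c = Some (a, s')) ->
    bb_move (BBConf (s, t) c r OSpoiler) (BBConf (s, t) (Some (a, s')) RStar ODuplicator)
| bbS1_check : forall s t c r a s',
    trans s a s' -> c <> None -> c <> Some (a, s') ->
    bb_move (BBConf (s, t) c r OSpoiler) (BBConf (s, t) (Some (a, s')) RCheck ODuplicator)
| bbS2 : forall s t c r a t',
    trans t a t' ->
    bb_move (BBConf (s, t) c r OSpoiler) (BBConf (t, s) (Some (a, t')) RCheck ODuplicator)
| bbD1 : forall u v a u' r,
    a = tau ->
    bb_move (BBConf (u, v) (Some (a, u')) r ODuplicator) (BBConf (u', v) None RCheck OSpoiler)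
| bbD2 : forall u v a u' r v',
    trans v a v' ->
    bb_move (BBConf (u, v) (Some (a, u')) r ODuplicator) (BBConf (u', v') None RCheck OSpoiler)
| bbD3 : forall u v a u' r v',
    trans v tau v' ->
    bb_move (BBConf (u, v) (Some (a, u')) r ODuplicator) (BBConf (u, v') (Some (a, u')) RStar OSpoiler).

(* <(s,t), c, m, r>_owner ; None stands for dagger in both c and m *)
Record gbconf := GBConf {
  gb_pair : S * S;
  gb_c : option (A * S);
  gb_m : option (S * ftag);
  gb_r : rflag;
  gb_own : owner }.

Inductive gb_smove : gbconf -> gbconf -> Prop :=
| gbS1 : forall s t c m r,
    c <> None ->
    gb_smove (GBConf (s, t) c m r OSpoiler) (GBConf (s, t) c m RStar ODuplicator)
| gbS2a : forall s t c m r a s',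
    trans s a s' -> c = None ->
    gb_smove (GBConf (s, t) c m r OSpoiler)
             (GBConf (s, t) (Some (a, s')) (Some (t, Frown)) RStar ODuplicator)
| gbS2b : forall s t c m r a s',
    trans s a s' -> c <> Some (a, s') ->
    gb_smove (GBConf (s, t) c m r OSpoiler)
             (GBConf (s, t) (Some (a, s')) (Some (t, Frown)) RCheck ODuplicator)
| gbS3 : forall s t c m r a t',
    trans t a t' ->
    gb_smove (GBConf (s, t) c m r OSpoiler)
             (GBConf (t, s) (Some (a, t')) (Some (s, Frown)) RCheck ODuplicator).

Inductive gb_dmove_eager : gbconf -> gbconf -> Prop :=
| gbD1 : forall u v a u' vb f r,
    a = tau ->
    gb_dmove_eager (GBConf (u, v) (Some (a, u')) (Some (vb, f)) r ODuplicator)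
                   (GBConf (u', vb) None None RCheck OSpoiler)
| gbD2b : forall u v a u' vb f r v',
    f = Frown -> trans vb a v' ->
    gb_dmove_eager (GBConf (u, v) (Some (a, u')) (Some (vb, f)) r ODuplicator)
                   (GBConf (u', v') None None RCheck OSpoiler)
| gbD3a : forall u v a u' vb f r v',
    trans vb tau v' ->
    gb_dmove_eager (GBConf (u, v) (Some (a, u')) (Some (vb, f)) r ODuplicator)
                   (GBConf (u, v') (Some (a, u')) (Some (v', f)) RStar OSpoiler)
| gbD3b : forall u v a u' vb f r v',
    f = Smile -> trans vb tau v' ->
    gb_dmove_eager (GBConf (u, v) (Some (a, u')) (Some (vb, f)) r ODuplicator)
                   (GBConf (u', v') None None RCheck OSpoiler).

Inductive gb_dmove_D2a : gbconf -> gbconf -> Prop :=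
| gbD2a : forall u v a u' vb f r v',
    f = Frown -> trans vb a v' ->
    gb_dmove_D2a (GBConf (u, v) (Some (a, u')) (Some (vb, f)) r ODuplicator)
                 (GBConf (u', v') (Some (a, u')) (Some (v', Smile)) RStar OSpoiler).

Definition gb_dmove (x y : gbconf) : Prop := gb_dmove_eager x y \/ gb_dmove_D2a x y.

Definition gb_move (x y : gbconf) : Prop := gb_smove x y \/ gb_dmove x y.

Definition bb_strategy (rho : bbconf -> option bbconf) : Prop :=
  forall x y, rho x = Some y -> bb_own x = ODuplicator /\ bb_move x y.

Definition gb_strategy (rho : gbconf -> option gbconf) : Prop :=
  forall x y, rho x = Some y -> gb_own x = ODuplicator /\ gb_dmove x y.

(* Eager: the strategy never uses move (D2)(a). *)
Definition gb_eager (rho : gbconf -> option gbconf) : Prop :=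
  forall x y, rho x = Some y -> gb_dmove_eager x y.

Definition g (x : bbconf) : gbconf :=
  match bb_c x with
  | Some c => GBConf (bb_pair x) (Some c) (Some (snd (bb_pair x), Frown)) (bb_r x) (bb_own x)
  | None => GBConf (bb_pair x) None None (bb_r x) (bb_own x)
  end.

End Games.

(* It is encoded by
   its length [len] (None = infinite, Some n = n configurations, n >= 1) and
   a function [p : nat -> C] whose values at positions < len are the play. *)
Definition in_play (len : option nat) (i : nat) : Prop :=
  match len with None => True | Some n => i < n end.

Definition is_play {C : Type} (move : C -> C -> Prop) (len : option nat) (p : nat -> C) : Prop :=
  len <> Some 0 /\ forall i, in_play len (S i) -> move (p i) (p (S i)).

Definition consistent {C : Type} (own : C -> owner) (rho : C -> option C)
    (len : option nat) (p : nat -> C) : Prop :=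
  forall i, in_play len (S i) -> own (p i) = ODuplicator -> rho (p i) = Some (p (S i)).


Set Implicit Arguments.
Unset Strict Implicit.

(* The image of [g] consists of the configurations whose [m]-component is
   determined by the rest: dagger when [c] is dagger, and [(t, frown)] for the
   pair [(s, t)] otherwise.  Spoiler moves and eager Duplicator moves (the only
   ones that never produce a [smile] tag) keep a play inside this image, where
   the moves of the two games correspond.  So Duplicator can play the
   branching game by following [rho_gb] on the augmented configuration and
   forgetting the [m]-component of the answer. *)

Section Augmentation.

Variable L : LTS.

Definition forget_m (y : gbconf L) : bbconf L :=
  @BBConf L (gb_pair y) (gb_c y) (gb_r y) (gb_own y).

Lemma gb_own_g (x : bbconf L) : gb_own (g x) = bb_own x.
Proof. destruct x as [p [c|] r o]; reflexivity. Qed.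

Lemma gb_dmove_eager_g (x : bbconf L) (y : gbconf L) :
  gb_dmove_eager (g x) y -> g (forget_m y) = y /\ bb_move x (forget_m y).
Proof.
  destruct x as [[u v] [[a u']|] r o]; unfold g; simpl;
    intro Hmove; inversion Hmove; subst; try discriminate;
    unfold forget_m, g; simpl; split; try reflexivity.
  - apply bbD1; reflexivity.
  - apply bbD2; assumption.
  - apply bbD3; assumption.
Qed.

Lemma gb_smove_g (x y : bbconf L) :
  bb_own x = OSpoiler -> bb_move x y -> gb_smove (g x) (g y).
Proof.
  intros Hown Hmove; destruct Hmove; simpl in Hown; try discriminate;
    unfold g; simpl.
  - destruct H0 as [-> | ->].
    + apply gbS2a; auto.
    + apply gbS1; discriminate.
  - destruct c as [c|]; [apply gbS2b; auto | congruence].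
  - destruct c; apply gbS3; assumption.
Qed.

Variable rho_gb : gbconf L -> option (gbconf L).
Hypothesis rho_gb_strategy : gb_strategy rho_gb.
Hypothesis rho_gb_eager : gb_eager rho_gb.

Definition bb_of_gb (x : bbconf L) : option (bbconf L) :=
  option_map forget_m (rho_gb (g x)).

Lemma bb_of_gb_spec (x y : bbconf L) :
  bb_of_gb x = Some y ->
  bb_own x = ODuplicator /\ bb_move x y /\ rho_gb (g x) = Some (g y).
Proof.
  unfold bb_of_gb; destruct (rho_gb (g x)) as [z|] eqn:Hrho; simpl;
    intro Hy; [injection Hy as <- | discriminate].
  destruct (gb_dmove_eager_g (rho_gb_eager Hrho)) as [Hgz Hmove].
  destruct (rho_gb_strategy Hrho) as [Hown _].
  rewrite gb_own_g in Hown; rewrite Hgz; auto.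
Qed.

Lemma bb_strategy_of_gb : bb_strategy bb_of_gb.
Proof. intros x y Hxy; destruct (bb_of_gb_spec Hxy) as [Hown [Hmove _]]; auto. Qed.

Lemma consistent_g (len : option nat) (pi : nat -> bbconf L) :
  consistent (@bb_own L) bb_of_gb len pi ->
  consistent (@gb_own L) rho_gb len (fun i => g (pi i)).
Proof.
  intros Hcons i Hi Hown; rewrite gb_own_g in Hown.
  destruct (bb_of_gb_spec (Hcons i Hi Hown)) as [_ [_ Hrho]]; exact Hrho.
Qed.

Lemma is_play_g (len : option nat) (pi : nat -> bbconf L) :
  is_play (@bb_move L) len pi ->
  consistent (@gb_own L) rho_gb len (fun i => g (pi i)) ->
  is_play (@gb_move L) len (fun i => g (pi i)).
Proof.
  intros [Hlen Hmoves] Hcons; split; [exact Hlen|]; intros i Hi.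
  destruct (bb_own (pi i)) eqn:Hown.
  - left; apply gb_smove_g; auto.
  - right; rewrite <- gb_own_g in Hown.
    apply (rho_gb_strategy (Hcons i Hi Hown)).
Qed.

End Augmentation.

Theorem proposition5p13 (L : LTS) (rho_gb : gbconf L -> option (gbconf L)) :
  gb_strategy rho_gb -> gb_eager rho_gb ->
  exists rho_bb : bbconf L -> option (bbconf L),
    bb_strategy rho_bb /\
    forall (len : option nat) (pi : nat -> bbconf L),
      is_play (@bb_move L) len pi ->
      consistent (@bb_own L) rho_bb len pi ->
      is_play (@gb_move L) len (fun i => g (pi i)) /\
      consistent (@gb_own L) rho_gb len (fun i => g (pi i)).
Proof.
  intros Hstrategy Heager.
  exists (bb_of_gb rho_gb); split.
  - exact (bb_strategy_of_gb Hstrategy Heager).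
  - intros len pi Hplay Hcons.
    assert (Hcons_gb := consistent_g Hstrategy Heager Hcons).
    split; [exact (is_play_g Hstrategy Hplay Hcons_gb) | exact Hcons_gb].
Qed.
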